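(* Let $I$ be a resident-minimal and hospital-complete instance and let $(P,X)$ be a prescription for $I$. Then $|\mathrm{res}\,P\setminus\mathrm{res}\,\mathrm{tent}(I)|\ge|\mathrm{tgs}(P,X)|$.
   Context: An instance $I$ consists of finite disjoint sets $R$ (residents) and $H$ (hospitals), a positive integer quota $q_h$ for each $h\in H$, for each $r\in R$ a preference list of $r$ (a sequence of distinct members of $H$, not necessarily all), and for each $h\in H$ a preference list of $h$ (a sequence of distinct members of $R$). A list is complete if it contains every member of the opposite side; an instance is hospital-complete if every hospital's list is complete. A match is a pair $(r,h)\in R\times H$. For a set $M$ of matches, $\mathrm{res}_h M=\{r:(r,h)\in M\}$, $\mathrm{res}\,M=\{r:(r,h)\in M\text{ for some }h\}$. An event is $(r,h)^+$ (proposal) or $(r,h)^-$ (rejection). For an event sequence $\sigma$, $\mathrm{prop}(\sigma)$, $\mathrm{rej}(\sigma)$ are the sets of matches proposed/rejected in $\sigma$ and $\mathrm{tent}(\sigma)=\mathrm{prop}(\sigma)\setminus\mathrm{rej}(\sigma)$. A match $(r,h)\in M$ is ousted from $M$ in $I$ if the list of $h$ in $I$ contains at least $q_h$ residents of $\mathrm{res}_h M$ and either $r$ is not on it or $r$ is preceded on it by at least $q_h$ residents of $\mathrm{res}_h M$. $I$-feasible sequences: the empty sequence is $I$-feasible; if $\sigma$ is $I$-feasible then $\sigma+(r,h)^+$ is $I$-feasible if $r\notin\mathrm{res}\,\mathrm{tent}(\sigma)$, $(r,h)\notin\mathrm{prop}(\sigma)$, $h$ is on the list of $r$ in $I$ and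 $(r,h')\in\mathrm{rej}(\sigma)$ for every $h'$ preceding $h$ on it; and $\sigma+(r,h)^-$ is $I$-feasible if $(r,h)$ is ousted from $\mathrm{prop}(\sigma)$ in $I$ and $(r,h)\notin\mathrm{rej}(\sigma)$. All maximal $I$-feasible sequences contain the same events; $\mathrm{prop}(I),\mathrm{tent}(I)$ denote $\mathrm{prop}(\sigma),\mathrm{tent}(\sigma)$ for any maximal $I$-feasible $\sigma$. $I$ is resident-minimal if $\mathrm{prop}(I)$ equals the set of matches $(r,h)$ with $h$ on the list of $r$ in $I$. For a resident-minimal and hospital-complete instance $I$, a prescription for $I$ is a pair $(P,X)$ of sets of matches such that: (P1) $P\cap\mathrm{prop}(I)=\emptyset$; (P2) for each $r\in R$ there is at most one $h$ with $(r,h)\in P$; (P3) $X\subseteq\mathrm{tent}(I)$; (P4) $\mathrm{res}\,P\cap\mathrm{res}\,\mathrm{tent}(I)\subseteq\mathrm{res}\,X$; (P5) for each $h\in H$, $|\mathrm{res}_h(P\cup(\mathrm{tent}(I)\setminus X))|\le q_h$, with equality if $\mathrm{res}_h X\neq\emptyset$; (P6) for each $h\in H$, every member of $\mathrm{res}_h(P\cup(\mathrm{tent}(I)\setminus X))$ precedes all members of $\mathrm{res}_h X$ in the list of $h$ in $I$. Its target set is $\mathrm{tgs}(P,X)=\{(r,h)\in X: r\notin\mathrm{res}\,P\}$. *)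

From mathcomp Require Import all_boot.
Set Implicit Arguments. Unset Strict Implicit. Unset Printing Implicit Defensive.

Section HR.
Variables (R H : finType).

Record instance := Instance {
  quota : H -> nat;
  rlist : R -> seq H;
  hlist : H -> seq R }.

Definition valid_instance (I : instance) : Prop :=
  (forall h, 0 < quota I h) /\ (forall r, uniq (rlist I r)) /\
  (forall h, uniq (hlist I h)).

Definition hospital_complete (I : instance) : Prop :=
  forall h r, r \in hlist I h.

Definition match_t := (R * H)%type.

Definition res_h (h : H) (M : {set match_t}) : {set R} := [set r | (r, h) \in M].
Definition res (M : {set match_t}) : {set R} := [set r | [exists h, (r, h) \in M]].

(* Events: (true, m) is the proposal m^+, (false, m) is the rejection m^-. *)
Definition event := (bool * match_t)%type.
Definition prop_ev (r : R) (h : H) : event := (true, (r, h)).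
Definition rej_ev (r : R) (h : H) : event := (false, (r, h)).

Definition propS (s : seq event) : {set match_t} := [set m | (true, m) \in s].
Definition rejS (s : seq event) : {set match_t} := [set m | (false, m) \in s].
Definition tentS (s : seq event) : {set match_t} := propS s :\: rejS s.

Definition ousted (I : instance) (M : {set match_t}) (r : R) (h : H) : bool :=
  (quota I h <= #|[set r' in res_h h M | r' \in hlist I h]|) &&
  ((r \notin hlist I h) ||
   (quota I h <= #|[set r' in res_h h M |
                    (r' \in hlist I h) && (index r' (hlist I h) < index r (hlist I h))]|)).

Definition prop_ok (I : instance) (s : seq event) (r : R) (h : H) : Prop :=
  [/\ r \notin res (tentS s), (r, h) \notin propS s, h \in rlist I r &
      forall h', h' \in rlist I r -> index h' (rlist I r) < index h (rlist I r) ->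
                 (r, h') \in rejS s].

Definition rej_ok (I : instance) (s : seq event) (r : R) (h : H) : Prop :=
  ousted I (propS s) r h /\ (r, h) \notin rejS s.

Inductive feasible (I : instance) : seq event -> Prop :=
  | feas_nil : feasible I [::]
  | feas_prop s r h : feasible I s -> prop_ok I s r h -> feasible I (rcons s (prop_ev r h))
  | feas_rej s r h : feasible I s -> rej_ok I s r h -> feasible I (rcons s (rej_ev r h)).

Definition maximal_feasible (I : instance) (s : seq event) : Prop :=
  feasible I s /\ forall e, ~ feasible I (rcons s e).

(* resident-minimal, expressed via a maximal feasible sequence sigma
   (prop(I) = prop(sigma) for any maximal sigma). *)
Definition resident_minimal_wrt (I : instance) (sigma : seq event) : Prop :=
  propS sigma = [set m : match_t | m.2 \in rlist I m.1].

(* Prescription (P,X) for I, where propI = prop(I), tentI = tent(I). *)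
Definition prescription (I : instance) (propI tentI : {set match_t})
    (P X : {set match_t}) : Prop :=
  (* P1 - P4 *)
  [/\ P :&: propI = set0,
      (forall r h h', (r, h) \in P -> (r, h') \in P -> h = h'),
      X \subset tentI &
      res P :&: res tentI \subset res X] /\
  [/\ (forall h, #|res_h h (P :|: (tentI :\: X))| <= quota I h /\
                 (res_h h X != set0 -> #|res_h h (P :|: (tentI :\: X))| = quota I h)) (* P5 *)
    & (forall h r r', r \in res_h h (P :|: (tentI :\: X)) -> r' \in res_h h X ->
          (r \in hlist I h) && (index r (hlist I h) < index r' (hlist I h)))]. (* P6 *)

Definition tgs (P X : {set match_t}) : {set match_t} :=
  [set m in X | m.1 \notin res P].

End HR.

From mathcomp Require Import all_boot.
From mathcomp Require Import zify.

Set Implicit Arguments.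
Unset Strict Implicit.

(** At a hospital [h] with [res_h h X] nonempty, (P5) fills [h] exactly to its
    quota with [res_h h P] and the tentative matches of [h] outside [X]; as the
    tentative matches of [h] never exceed its quota, [#|res_h h X| <= #|res_h h P|].
    Summing over hospitals gives [#|X| <= #|P| = #|res P|], using (P2).  By (P4)
    every resident of [res P :&: res tent(I)] is the resident of a match of [X]
    that is not a target, so [#|tgs P X| + #|res P :&: res tent(I)| <= #|X|],
    and the claim follows. *)

Section Matches.
Variables (R H : finType).
Implicit Types (M A B P X T : {set match_t R H}) (h : H).

Lemma in_res_h h M r : (r \in res_h h M) = ((r, h) \in M).
Proof. by rewrite inE. Qed.

Lemma in_res M r : (r \in res M) = [exists h, (r, h) \in M].
Proof. by rewrite inE. Qed.

Lemma res_hU h A B : res_h h (A :|: B) = res_h h A :|: res_h h B.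
Proof. by apply/setP => r; rewrite !inE. Qed.

Lemma res_hD h A B : res_h h (A :\: B) = res_h h A :\: res_h h B.
Proof. by apply/setP => r; rewrite !inE. Qed.

Lemma res_hS h A B : A \subset B -> res_h h A \subset res_h h B.
Proof. by move=> AB; apply/subsetP => r; rewrite !in_res_h => /(subsetP AB). Qed.

Lemma card_sum_res_h M : #|M| = \sum_h #|res_h h M|.
Proof.
rewrite -sum1_card (partition_big snd predT) //=; apply: eq_bigr => h _.
have pair_inj : injective (fun r : R => (r, h)) by move=> r r' [].
rewrite -(card_imset _ pair_inj) sum1_card.
apply: eq_card => -[r h']; rewrite unfold_in /=.
apply/andP/imsetP => [[rM /eqP eh]|[r' r'M [-> ->]]].
  by exists r; rewrite ?in_res_h -?eh.
by rewrite -in_res_h.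
Qed.

Lemma card_res_functional M :
  (forall r h h', (r, h) \in M -> (r, h') \in M -> h = h') -> #|res M| = #|M|.
Proof.
move=> fM; have -> : res M = fst @: M.
  apply/setP => r; rewrite in_res; apply/existsP/imsetP => [[h rh]|[[r' h] rh ->]].
    by exists (r, h).
  by exists h.
by apply: card_in_imset => -[r h] [r' h'] rh rh' /= er; rewrite er in rh *; rewrite (fM _ _ _ rh rh').
Qed.

Lemma card_tgs_add_le P X T :
  res P :&: res T \subset res X -> #|tgs P X| + #|res P :&: res T| <= #|X|.
Proof.
move=> PTX; set Y := [set m in X | m.1 \in res P].
have -> : #|X| = #|tgs P X| + #|Y|.
  rewrite -(cardsID [set m | m.1 \in res P] X) addnC.
  by congr (_ + _); apply: eq_card => m; rewrite !inE andbC.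
rewrite leq_add2l; apply: leq_trans (leq_imset_card fst Y).
apply/subset_leq_card/subsetP => r rPT.
have := subsetP PTX r rPT; rewrite in_res => /existsP [h rh].
by apply/imsetP; exists (r, h); rewrite // inE rh; move: rPT; rewrite inE => /andP [->].
Qed.

End Matches.

Lemma leq_card_setUD {T : finType} (A B C : {set T}) :
  C \subset B -> #|A :|: (B :\: C)| + #|C| <= #|A| + #|B|.
Proof.
move=> CB; have := leq_of_leqif (leq_card_setU A (B :\: C)).
have := subset_leq_card CB; rewrite cardsDS //; lia.
Qed.

(* Otherwise the tentative resident of [h] that [h] ranks worst is ousted, and
   its rejection would extend the maximal sequence. *)
Lemma card_tent_res_h_le_quota (R H : finType) (I : instance R H) sigma h :
  hospital_complete I -> maximal_feasible I sigma ->
  #|res_h h (tentS sigma)| <= quota I h.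
Proof.
move=> hc [feas maxf]; rewrite leqNgt; apply/negP => big.
set Th := res_h h (tentS sigma) in big.
have [r0 r0T] : exists r0, r0 \in Th by apply/card_gt0P; apply: leq_ltn_trans big.
have [r rT rmax] := @arg_maxnP _ r0 (mem Th) (fun r => index r (hlist I h)) r0T.
have {}rT : r \in Th := rT.
have {}rmax r' : r' \in Th -> index r' (hlist I h) <= index r (hlist I h) := rmax r'.
have ThP r' : r' \in Th -> r' \in res_h h (propS sigma).
  by rewrite !inE => /andP [].
apply: (maxf (rej_ev r h)); apply: feas_rej => //; split; last first.
  by move: rT; rewrite !inE => /andP [].
rewrite /ousted hc /=; apply/andP; split.
  apply: leq_trans (ltnW big) (subset_leq_card _).
  by apply/subsetP => r' r'T; rewrite inE ThP // hc.
have quota_le : quota I h <= #|Th :\ r| by move: big; rewrite (cardsD1 r Th) rT.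
apply: leq_trans quota_le (subset_leq_card _).
apply/subsetP => r'; rewrite in_setD1 => /andP [nr r'T].
rewrite inE ThP // hc /= ltn_neqAle (rmax r' r'T) andbT.
by apply: contra nr => /eqP/index_inj -> //; rewrite hc.
Qed.

Section Prescription.
Variables (R H : finType) (I : instance R H) (sigma : seq (event R H)).
Variables (P X : {set match_t R H}).
Hypothesis hc : hospital_complete I.
Hypothesis mf : maximal_feasible I sigma.
Hypothesis presc : prescription I (propS sigma) (tentS sigma) P X.

Lemma leq_card_res_h_prescription h : #|res_h h X| <= #|res_h h P|.
Proof.
have [[_ _ XT _] [P5 _]] := presc.
have [-> | Xh0] := eqVneq (res_h h X) set0; first by rewrite cards0.
have [_ /(_ Xh0)] := P5 h; rewrite res_hU res_hD => fill.
have := leq_card_setUD (res_h h P) (res_hS h XT).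
have := card_tent_res_h_le_quota h hc mf.
rewrite fill; lia.
Qed.

Lemma leq_card_prescription : #|X| <= #|P|.
Proof.
rewrite (card_sum_res_h X) (card_sum_res_h P).
by apply: leq_sum => h _; apply: leq_card_res_h_prescription.
Qed.

End Prescription.

Theorem proposition7 (R H : finType) (I : instance R H) (sigma : seq (event R H))
    (P X : {set match_t R H}) :
  valid_instance I ->
  hospital_complete I ->
  maximal_feasible I sigma ->
  resident_minimal_wrt I sigma ->
  prescription I (propS sigma) (tentS sigma) P X ->
  #|tgs P X| <= #|res P :\: res (tentS sigma)|.
Proof.
move=> _ hc mf _ presc; have [[_ P2 _ P4] _] := presc.
have := card_tgs_add_le P4.
have := leq_card_prescription hc mf presc.
rewrite -(card_res_functional P2) -(cardsID (res (tentS sigma)) (res P)).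
lia.
Qed.
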